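(* Let $v$ be a $P$-vertex of the SP tree $T$ with children $x,y$. Then for all $\tilde{\boldsymbol s}_v\in\mathbb Z^{\Lambda}$ and $\tilde{\boldsymbol c}_v\in\mathbb Z_{\ge0}^{\Lambda}$, $$d_v(\tilde{\boldsymbol s}_v,\tilde{\boldsymbol c}_v)=\min\{d_x(\tilde{\boldsymbol s}_x,\tilde{\boldsymbol c}_x)+d_y(\tilde{\boldsymbol s}_y,\tilde{\boldsymbol c}_y)\ :\ \tilde{\boldsymbol s}_x+\tilde{\boldsymbol s}_y=\tilde{\boldsymbol s}_v,\ \tilde{\boldsymbol c}_x+\tilde{\boldsymbol c}_y=\tilde{\boldsymbol c}_v,\ \tilde{\boldsymbol s}_x,\tilde{\boldsymbol s}_y\in\mathbb Z_{\ge0}^{\Lambda},\ \tilde{\boldsymbol c}_x,\tilde{\boldsymbol c}_y\in\mathbb Z_{\ge0}^{\Lambda}\},$$ with the conventions $\infty+z=\infty$ and $\min\emptyset=\infty$.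
   Context: A RobMCF instance $(G,u,c,\boldsymbol b)$ consists of a finite directed graph (parallel arcs allowed) $G=(V,A)$ with $A=A^{\mathrm{fix}}\cup A^{\mathrm{free}}$ (disjoint; fixed and free arcs), capacities $u:A\to\mathbb Z_{\ge0}$, costs $c:A\to\mathbb Z_{\ge0}$, a finite nonempty scenario set $\Lambda$ and balances $b^\lambda:V\to\mathbb Z$, $\lambda\in\Lambda$, with $\sum_v b^\lambda(v)=0$. Series-parallel (SP) digraphs are defined recursively: a single arc $(o,q)$ is an SP digraph with origin $o$ and target $q$; if $G_1$ (origin $o_1$, target $q_1$) and $G_2$ (origin $o_2$, target $q_2$) are SP digraphs, then their series composition (identify $q_1$ with $o_2$; origin $o_1$, target $q_2$) and their parallel composition (identify $o_1$ with $o_2$ to form the origin and $q_1$ with $q_2$ to form the target) are SP digraphs. Here $G$ is an SP digraph. An SP tree $T$ of $G$ is a rooted binary tree whose leaves ($L$-vertices) correspond bijectively to the arcs of $G$ and whose inner vertices are $S$-vertices (ordered children) or $P$-vertices; each tree vertex $v$ is associated with the SP subgraph $G_v$ (origin $o_v$, target $q_v$): a leaf with its single arc, an $S$-vertex with the series composition of its children's subgraphs (first child first), a $P$-vertex with their parallel composition; the root $r$ has $G_r=G$. For a tree vertex $v$, $\tilde{\boldsymbol s}_v=(\tilde s^\lambda_v)_{\lambda\in\Lambda}\in\mathbb Z^{\Lambda}$ and $\tilde{\boldsymbol c}_v=(\tilde c^\lambda_v)_{\lambda\in\Lambda}\in\mathbb Z_{\ge0}^{\Lambda}$, the demand label $d_v(\tilde{\boldsymbol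 s}_v,\tilde{\boldsymbol c}_v)\in\{0,\infty\}$ equals $0$ if there exist functions $f^\lambda:A(G_v)\to\mathbb Z_{\ge0}$, $\lambda\in\Lambda$, with (i) $\sum_{a\in A(G_v)}c(a)f^\lambda(a)=\tilde c^\lambda_v$ for all $\lambda$; (ii) for all $w\in V(G_v)\setminus\{q_v\}$ and $\lambda$: $\sum_{a=(w,z)\in A(G_v)}f^\lambda(a)-\sum_{a=(z,w)\in A(G_v)}f^\lambda(a)$ equals $b^\lambda(w)$ if $w\ne o_v$ and equals $\tilde s^\lambda_v$ if $w=o_v$; (iii) $f^\lambda(a)=f^{\lambda'}(a)$ for all $a\in A^{\mathrm{fix}}\cap A(G_v)$ and $\lambda,\lambda'$; (iv) $f^\lambda(a)\le u(a)$ for all $a\in A(G_v)$, $\lambda$; and $d_v(\tilde{\boldsymbol s}_v,\tilde{\boldsymbol c}_v)=\infty$ otherwise. *)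

From mathcomp Require Import all_boot all_order all_algebra.
From Stdlib Require Import ClassicalDescription.
Set Implicit Arguments. Unset Strict Implicit. Unset Printing Implicit Defensive.
Import GRing.Theory Num.Theory.

(* Values of demand labels: {0, oo}. *)
Inductive lab := L0 | Linf.

Definition ladd (x y : lab) : lab :=
  match x, y with L0, L0 => L0 | _, _ => Linf end.

Definition lab_min (S : lab -> Prop) : lab :=
  if excluded_middle_informative (S L0) then L0 else Linf.

(* SP trees: leaves are arcs, inner vertices are S-vertices (ordered children)
   or P-vertices. *)
Inductive sptree (A : Type) :=
| Leaf of A
| Snode of sptree A & sptree A
| Pnode of sptree A & sptree A.
Arguments Leaf {A}. Arguments Snode {A}. Arguments Pnode {A}.

Fixpoint subtree (A : Type) (t r : sptree A) : Prop :=
  t = r \/ match r with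
           | Leaf _ => False
           | Snode r1 r2 | Pnode r1 r2 => subtree t r1 \/ subtree t r2
           end.

Section SP.
Variables (V A : finType) (tail head : A -> V).

Fixpoint orig (t : sptree A) : V :=
  match t with Leaf a => tail a | Snode t1 _ => orig t1 | Pnode t1 _ => orig t1 end.
Fixpoint targ (t : sptree A) : V :=
  match t with Leaf a => head a | Snode _ t2 => targ t2 | Pnode t1 _ => targ t1 end.

Fixpoint arcs (t : sptree A) : {set A} :=
  match t with
  | Leaf a => [set a]
  | Snode t1 t2 | Pnode t1 t2 => arcs t1 :|: arcs t2
  end.

Definition verts (t : sptree A) : {set V} :=
  [set tail a | a in arcs t] :|: [set head a | a in arcs t].

Fixpoint sp_wf (t : sptree A) : Prop :=
  match t with
  | Leaf a => tail a <> head a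
  | Snode t1 t2 =>
      [/\ sp_wf t1, sp_wf t2, targ t1 = orig t2,
          [disjoint arcs t1 & arcs t2] &
          verts t1 :&: verts t2 = [set targ t1]]
  | Pnode t1 t2 =>
      [/\ sp_wf t1, sp_wf t2, orig t1 = orig t2 /\ targ t1 = targ t2,
          [disjoint arcs t1 & arcs t2] &
          verts t1 :&: verts t2 = [set orig t1; targ t1]]
  end.

Definition sp_tree_of (r : sptree A) : Prop :=
  [/\ sp_wf r, arcs r = [set: A] & verts r = [set: V]].

Variables (L : finType) (fixed : {set A}) (u c : A -> nat) (b : L -> V -> int).

Definition feasible (t : sptree A) (s : L -> int) (cv : L -> nat) : Prop :=
  exists f : L -> A -> nat,
    [/\ (forall l, \sum_(a in arcs t) c a * f l a = cv l)%N,
        (forall w l, w \in verts t -> w != targ t ->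
           (\sum_(a in arcs t | tail a == w) (f l a)%:Z
            - \sum_(a in arcs t | head a == w) (f l a)%:Z)%R
           = (if w == orig t then s l else b l w)),
        (forall a l l', a \in arcs t -> a \in fixed -> f l a = f l' a) &
        (forall a l, a \in arcs t -> f l a <= u a)%N].

Definition demand (t : sptree A) (s : L -> int) (cv : L -> nat) : lab :=
  if excluded_middle_informative (feasible t s cv) then L0 else Linf.

End SP.

From Pilot Require Import Defs.
From mathcomp Require Import all_boot all_order all_algebra.
From Stdlib Require Import ClassicalDescription.
Import GRing.Theory Num.Theory.

(* For a P-vertex v with children x, y the arc set of G_v is the disjoint
   union of those of G_x and G_y, and the two subgraphs only share o_v and q_v.
   Hence
   - restricting a flow on G_v to G_x (resp. G_y) gives a flow on G_x whose
     supply at o_x is its own net outflow there, nonnegative because no arc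
     of a well-formed SP graph enters its origin (flow_Pnode_left,
     feasible_Pnode_split);
   - two flows on G_x and G_y glue to a flow on G_v whose supply and cost are
     the sums (feasible_Pnode_glue).  Both sides of the
   theorem take values in {0, oo} and are 0 exactly when the corresponding
   existence statement holds, so the two facts above give it. *)

Set Implicit Arguments.
Unset Strict Implicit.
Unset Printing Implicit Defensive.

(* A classical decision into {0, oo} is 0 exactly when the proposition holds;
   both [demand] and [lab_min] are of this shape. *)
Lemma decide_L0 (P : Prop) :
  (if excluded_middle_informative P then L0 else Linf) = L0 <-> P.
Proof. by case: excluded_middle_informative. Qed.

Lemma lab_eqP (z z' : lab) : (z = L0 <-> z' = L0) -> z = z'.
Proof.
by case: z; case: z' => // -[H1 H2]; first [exact/esym/H1 | exact/H2].
Qed.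

Lemma ladd_L0 (z z' : lab) : ladd z z' = L0 <-> z = L0 /\ z' = L0.
Proof. by case: z; case: z'; split=> // -[]. Qed.

Lemma big_setU_disjoint (R : Type) (idx : R) (op : Monoid.com_law idx)
    (I : finType) (X Y : {set I}) (P : pred I) (F : I -> R) :
  [disjoint X & Y] ->
  \big[op/idx]_(i in X :|: Y | P i) F i =
    op (\big[op/idx]_(i in X | P i) F i) (\big[op/idx]_(i in Y | P i) F i).
Proof.
move=> dXY; rewrite !big_mkcondr.
by rewrite (eq_bigl [predU X & Y]) ?bigU // => i; rewrite !inE.
Qed.

Section SPGraph.
Variables (V A : finType) (tail head : A -> V).

Local Notation orig := (orig tail).
Local Notation targ := (targ head).
Local Notation verts := (verts tail head).
Local Notation sp_wf := (sp_wf tail head).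

Lemma verts_arcsU (t t1 t2 : sptree A) :
  arcs t = arcs t1 :|: arcs t2 -> verts t = verts t1 :|: verts t2.
Proof. by rewrite /Defs.verts => ->; rewrite !imsetU setUACA. Qed.

Lemma tail_in t a : a \in arcs t -> tail a \in verts t.
Proof. by move=> Ha; rewrite inE imset_f. Qed.

Lemma head_in t a : a \in arcs t -> head a \in verts t.
Proof. by move=> Ha; rewrite inE imset_f ?orbT. Qed.

Lemma orig_in t : orig t \in verts t.
Proof.
elim: t => [a|t1 IH1 t2 _|t1 IH1 t2 _] /=; first by rewrite tail_in ?inE.
all: by rewrite (@verts_arcsU _ t1 t2) // inE IH1.
Qed.

Lemma targ_in t : targ t \in verts t.
Proof.
elim: t => [a|t1 _ t2 IH2|t1 IH1 t2 _] /=; first by rewrite head_in ?inE.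
- by rewrite (@verts_arcsU _ t1 t2) // inE IH2 orbT.
- by rewrite (@verts_arcsU _ t1 t2) // inE IH1.
Qed.

Lemma orig_neq_targ t : sp_wf t -> orig t != targ t.
Proof.
elim: t => [a|t1 IH1 t2 _|t1 IH1 t2 _] /=; first by move/eqP.
- case=> w1 _ _ _ I12; apply: contraNneq (IH1 w1) => E.
  have : orig t1 \in verts t1 :&: verts t2 by rewrite inE orig_in E targ_in.
  by rewrite I12 inE.
- by case=> /IH1.
Qed.

Lemma head_neq_orig t a : sp_wf t -> a \in arcs t -> head a != orig t.
Proof.
elim: t => [a'|t1 IH1 t2 IH2|t1 IH1 t2 IH2] /=.
- by move=> w; rewrite inE => /eqP ->; apply/eqP => /esym.
- case=> w1 w2 _ _ I12; rewrite inE => /orP[Ha|Ha]; first exact: IH1.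
  apply: contraNneq (orig_neq_targ w1) => E.
  have : orig t1 \in verts t1 :&: verts t2 by rewrite inE orig_in -E head_in.
  by rewrite I12 inE.
- case=> w1 w2 [eo _] _ _; rewrite inE => /orP[Ha|Ha]; first exact: IH1.
  by rewrite eo; apply: IH2.
Qed.

Lemma subtree_wf t r : subtree t r -> sp_wf r -> sp_wf t.
Proof.
elim: r => [a|r1 IH1 r2 IH2|r1 IH1 r2 IH2] /=; first by case=> [->|[]].
all: by case=> [->//|[H|H]] [w1 w2 _ _ _]; [exact: IH1 | exact: IH2].
Qed.

Lemma sp_wf_Pnode_sym x y : sp_wf (Pnode x y) -> sp_wf (Pnode y x).
Proof.
case=> wx wy [eo et] dxy Ixy; split=> //; first by rewrite disjoint_sym.
by rewrite setIC Ixy eo et.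
Qed.

Lemma Pnode_private x y w : sp_wf (Pnode x y) ->
  w \in verts x -> w != orig x -> w != targ x -> w \notin verts y.
Proof.
case=> _ _ _ _ Ixy wx wo wt; apply/negP => wy.
have : w \in verts x :&: verts y by rewrite inE wx wy.
by rewrite Ixy !inE (negbTE wo) (negbTE wt).
Qed.

Definition net (t : sptree A) (g : A -> nat) (w : V) : int :=
  (\sum_(a in arcs t | tail a == w) (g a)%:Z
   - \sum_(a in arcs t | head a == w) (g a)%:Z)%R.

Lemma net_congr t g g' w : {in arcs t, g =1 g'} -> net t g w = net t g' w.
Proof.
move=> gg'; rewrite /net.
by congr (_ - _)%R; apply: eq_bigr => a /andP[Ha _]; rewrite gg'.
Qed.

Lemma net_notin t g w : w \notin verts t -> net t g w = 0%R.
Proof.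
move=> wt; rewrite /net !big1 ?subr0 // => a /andP[Ha /eqP E].
- by move: wt; rewrite -E head_in.
- by move: wt; rewrite -E tail_in.
Qed.

(* The supply at the origin is nonnegative, as nothing flows into it. *)
Lemma net_orig_ge0 t g : sp_wf t -> (0 <= net t g (orig t))%R.
Proof.
move=> wt; rewrite /net [X in (_ - X)%R]big1 ?subr0 ?sumr_ge0 //.
by move=> a /andP[Ha E]; move: (head_neq_orig wt Ha); rewrite E.
Qed.

Lemma net_Pnode x y g w : [disjoint arcs x & arcs y] ->
  net (Pnode x y) g w = (net x g w + net y g w)%R.
Proof. by move=> dxy; rewrite /net /= !big_setU_disjoint // opprD addrACA. Qed.

Variables (L : finType) (fixed : {set A}) (u c : A -> nat) (b : L -> V -> int).

Local Notation feasible := (feasible tail head fixed u c b).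
Local Notation demand := (demand tail head fixed u c b).

Definition cost (t : sptree A) (g : A -> nat) : nat :=
  \sum_(a in arcs t) c a * g a.

Lemma cost_congr t g g' : {in arcs t, g =1 g'} -> cost t g = cost t g'.
Proof. by move=> gg'; apply: eq_bigr => a Ha; rewrite gg'. Qed.

Lemma cost_Pnode x y g : [disjoint arcs x & arcs y] ->
  cost (Pnode x y) g = cost x g + cost y g.
Proof.
move=> dxy; rewrite /cost (eq_bigl [predU arcs x & arcs y]) ?bigU //.
by move=> a; rewrite !inE.
Qed.

Definition is_flow (t : sptree A) (s : L -> int) (cv : L -> nat)
    (f : L -> A -> nat) : Prop :=
  [/\ forall l, cost t (f l) = cv l,
      forall w l, w \in verts t -> w != targ t ->
        net t (f l) w = (if w == orig t then s l else b l w),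
      forall a l l', a \in arcs t -> a \in fixed -> f l a = f l' a &
      forall a l, a \in arcs t -> f l a <= u a].

Lemma feasibleP t s cv : feasible t s cv <-> exists f, is_flow t s cv f.
Proof. by []. Qed.

Lemma demand_L0 t s cv : demand t s cv = L0 <-> feasible t s cv.
Proof. exact: decide_L0. Qed.

Lemma is_flow_congr t t' s cv f :
  arcs t = arcs t' -> orig t = orig t' -> targ t = targ t' ->
  is_flow t s cv f -> is_flow t' s cv f.
Proof. by rewrite /is_flow /cost /net /Defs.verts => -> -> ->. Qed.

Lemma is_flow_Pnode_sym x y s cv f : sp_wf (Pnode x y) ->
  is_flow (Pnode x y) s cv f -> is_flow (Pnode y x) s cv f.
Proof. by case=> _ _ [eo et] _ _; apply: is_flow_congr; rewrite //= setUC. Qed.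

Lemma flow_Pnode_left x y s cv f :
  sp_wf (Pnode x y) -> is_flow (Pnode x y) s cv f ->
  is_flow x (fun l => net x (f l) (orig x)) (fun l => cost x (f l)) f.
Proof.
move=> wP; have [_ _ _ dxy _] := wP.
have inP a : a \in arcs x -> a \in arcs (Pnode x y) by rewrite inE => ->.
case=> _ Fnet Ffix Fcap.
split=> // [w l wx wt|a l l' /inP|a l /inP]; [|exact: Ffix|exact: Fcap].
case: eqVneq => [->//|wo].
have wv : w \in verts (Pnode x y) by rewrite (@verts_arcsU _ x y) // inE wx.
have := Fnet w l wv wt; rewrite /= (negbTE wo) net_Pnode //.
by rewrite (net_notin _ (Pnode_private wP wx wo wt)) addr0.
Qed.

Lemma feasible_Pnode_split x y s cv :
  sp_wf (Pnode x y) -> feasible (Pnode x y) s cv ->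
  exists sx sy cx cy,
    [/\ forall l, s l = (sx l + sy l)%R, forall l, cv l = cx l + cy l,
        forall l, (0 <= sx l)%R /\ (0 <= sy l)%R,
        feasible x sx cx & feasible y sy cy].
Proof.
move=> wP; have [wx wy [eo _] dxy _] := wP.
move/feasibleP=> [f Ff].
exists (fun l => net x (f l) (orig x)), (fun l => net y (f l) (orig y)).
exists (fun l => cost x (f l)), (fun l => cost y (f l)); split.
- have [_ Fnet _ _] := Ff; move=> l.
  have oP : orig x \in verts (Pnode x y).
    by rewrite (@verts_arcsU _ x y) // inE orig_in.
  have := Fnet _ l oP (orig_neq_targ wx).
  by rewrite /= eqxx net_Pnode // eo => ->.
- by have [Fcost _ _ _] := Ff; move=> l; rewrite -Fcost cost_Pnode.
- by move=> l; split; apply: net_orig_ge0.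
- by exists f; apply: flow_Pnode_left wP Ff.
- exists f; apply: flow_Pnode_left (sp_wf_Pnode_sym wP) _.
  exact: is_flow_Pnode_sym wP Ff.
Qed.

Lemma feasible_Pnode_glue x y s cv sx sy cx cy : sp_wf (Pnode x y) ->
  (forall l, s l = (sx l + sy l)%R) -> (forall l, cv l = cx l + cy l) ->
  feasible x sx cx -> feasible y sy cy -> feasible (Pnode x y) s cv.
Proof.
move=> wP; have [wx wy [eo et] dxy _] := wP.
move=> Es Ec /feasibleP[fx [Xcost Xnet Xfix Xcap]].
move=> /feasibleP[fy [Ycost Ynet Yfix Ycap]].
pose f l a := if a \in arcs x then fx l a else fy l a.
have fx_x l : {in arcs x, f l =1 fx l} by move=> a Ha; rewrite /f Ha.
have fy_y l : {in arcs y, f l =1 fy l}.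
  by move=> a Ha; rewrite /f (disjointFl dxy Ha).
have arcsP a : a \in arcs (Pnode x y) -> a \in arcs x \/ a \in arcs y.
  by move/setUP.
apply/feasibleP; exists f; split.
- move=> l; rewrite cost_Pnode // (cost_congr (fx_x l)) (cost_congr (fy_y l)).
  by rewrite Ec Xcost Ycost.
- move=> w l; rewrite (@verts_arcsU _ x y) // inE /= => wxy wt.
  rewrite net_Pnode // (net_congr _ (fx_x l)) (net_congr _ (fy_y l)).
  case: eqVneq => [->|wo].
    rewrite Es Xnet ?orig_in ?orig_neq_targ // eo.
    by rewrite Ynet ?orig_in ?orig_neq_targ ?eqxx.
  case/orP: wxy => [wX|wY].
    rewrite (net_notin _ (Pnode_private wP wX wo wt)) addr0.
    by rewrite Xnet // (negbTE wo).
  rewrite eo in wo; rewrite et in wt.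
  rewrite (net_notin _ (Pnode_private (sp_wf_Pnode_sym wP) wY wo wt)) add0r.
  by rewrite Ynet // (negbTE wo).
- move=> a l l' /arcsP[] Ha afix.
  + by rewrite (fx_x l a Ha) (fx_x l' a Ha); apply: Xfix.
  + by rewrite (fy_y l a Ha) (fy_y l' a Ha); apply: Yfix.
- move=> a l /arcsP[] Ha.
  + by rewrite (fx_x l a Ha); apply: Xcap.
  + by rewrite (fy_y l a Ha); apply: Ycap.
Qed.

End SPGraph.

Theorem mainTheorem10
  (V A L : finType) (tail head : A -> V) (fixed : {set A})
  (u c : A -> nat) (b : L -> V -> int)
  (HL : (0 < #|L|)%N)
  (Hb : forall l, (\sum_(w : V) b l w)%R = 0%R)
  (r x y : sptree A)
  (Hr : sp_tree_of tail head r)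
  (Hv : subtree (Pnode x y) r)
  (s : L -> int) (cv : L -> nat) :
  demand tail head fixed u c b (Pnode x y) s cv =
  lab_min (fun z => exists (sx sy : L -> int) (cx cy : L -> nat),
     [/\ (forall l, s l = (sx l + sy l)%R),
         (forall l, cv l = (cx l + cy l)%N),
         (forall l, (0 <= sx l)%R /\ (0 <= sy l)%R) &
         z = ladd (demand tail head fixed u c b x sx cx)
                  (demand tail head fixed u c b y sy cy)]).
Proof.
have wP : sp_wf tail head (Pnode x y) by apply: subtree_wf Hv _; case: Hr.
apply: lab_eqP; rewrite demand_L0 /lab_min decide_L0; split.
- move=> /(feasible_Pnode_split wP) [sx [sy [cx [cy [Es Ec Hs Fx Fy]]]]].
  exists sx, sy, cx, cy; split=> //; apply/esym/ladd_L0.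
  by split; apply/demand_L0.
- move=> [sx [sy [cx [cy [Es Ec _ /esym/ladd_L0 [Dx Dy]]]]]].
  have /demand_L0 Fx := Dx; have /demand_L0 Fy := Dy.
  exact: feasible_Pnode_glue wP Es Ec Fx Fy.
Qed.
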